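(* Let $T$ be a tree of order $n\geq 3$ and let $\mathcal{G}$ be an arbitrary Abelian group of order at least $5$. Then there exists a labeling $f\colon E(T)\to\mathcal{G}$ with $f(e)\neq 0$ for every edge $e$, $w_f(v)\neq 0$ for every vertex $v$, and $w_f(u)\neq w_f(v)$ for every edge $uv$.
   Context: $w_f(v)=\sum_{u\in N(v)}f(uv)$, the sum taken in $\mathcal{G}$; $0$ is the identity of $\mathcal{G}$. *)

From HB Require Import structures.
From mathcomp Require Import all_boot all_order all_algebra.
Set Implicit Arguments. Unset Strict Implicit. Unset Printing Implicit Defensive.
Import GRing.Theory.
Local Open Scope ring_scope.

Definition simple_graph (V : finType) (adj : rel V) : Prop :=
  symmetric adj /\ irreflexive adj.

Definition connected_graph (V : finType) (adj : rel V) : Prop :=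
  forall x y : V, connect adj x y.

Definition acyclic_graph (V : finType) (adj : rel V) : Prop :=
  forall (x : V) (p : seq V),
    uniq (x :: p) -> (2 <= size p)%N -> path adj x p -> ~~ adj (last x p) x.

Definition is_tree (V : finType) (adj : rel V) : Prop :=
  [/\ simple_graph adj, connected_graph adj & acyclic_graph adj].

(* An edge labeling is a map on unordered pairs {u,v}; only its values on
   edges matter. The weight w_f(v) = sum over neighbours u of f(uv). *)
Definition weight (V : finType) (adj : rel V) (G : zmodType)
  (f : {set V} -> G) (v : V) : G :=
  \sum_(u | adj v u) f [set v; u].

(* Take a vertex c all of whose neighbours except one, q, are leaves (the parent of a deepest
   vertex of any rooting), and root the tree at c.  Fix distinct nonzero a1, a2, b1, b2.  Going
   up from the leaves, give the edge from each vertex u other than c and the leaves at c to its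
   parent the label that turns w(u) into an element of {a1, a2} or of {b1, b2}, according to
   the parity of the depth of u, different from the sum S of the labels below u: this label
   w(u) - S is nonzero, and two adjacent such vertices get different weights.  Among the
   remaining leaves at c, all but two are labelled w(q), one gets a label making the partial
   sum at c nonzero, and the last one a label avoiding four values, so that w(c) differs from
   0, from w(q) and from the weights of these leaves. *)

From mathcomp Require Import all_boot all_order all_algebra.
From mathcomp Require Import zify.
Set Implicit Arguments. Unset Strict Implicit. Unset Printing Implicit Defensive.
Import GRing.Theory.

Definition rooting (V : finType) (adj : rel V) (r : V) (d : V -> nat) (par : V -> V) :=
  d r = 0 /\ forall v, v != r -> adj (par v) v /\ d v = (d (par v)).+1.

Section Distance.
Variables (V : finType) (adj : rel V) (r : V).
Hypothesis conn : connected_graph adj.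

Definition reachable_in (n : nat) (v : V) : bool :=
  [exists p : n.-tuple V, path adj r p && (last r p == v)].

Lemma reachable_inP n v :
  reflect (exists2 p, path adj r p & last r p = v /\ size p = n) (reachable_in n v).
Proof.
apply: (iffP existsP) => [[p /andP [rp /eqP pv]]|[p rp [pv <-]]].
  by exists p; rewrite ?size_tuple.
by exists (in_tuple p); rewrite /= rp pv eqxx.
Qed.

Lemma reachable_in_some v : exists n, reachable_in n v.
Proof.
have /connectP [p rp pv] := conn r v.
by exists (size p); apply/reachable_inP; exists p.
Qed.

Definition dist (v : V) : nat := ex_minn (reachable_in_some v).

Lemma dist_reachable v : reachable_in (dist v) v.
Proof. by rewrite /dist; case: ex_minnP. Qed.

Lemma dist_min n v : reachable_in n v -> dist v <= n.
Proof. by rewrite /dist; case: ex_minnP => m _; apply. Qed.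

Lemma dist_root : dist r = 0.
Proof. by apply/eqP; rewrite -leqn0 dist_min //; apply/reachable_inP; exists [::]. Qed.

Lemma dist_parent v : v != r -> exists2 u, adj u v & dist v = (dist u).+1.
Proof.
move=> vr; have /reachable_inP [p] := dist_reachable v.
case/lastP: p => [|p u]; first by move=> _ [/= rv]; rewrite rv eqxx in vr.
rewrite rcons_path last_rcons size_rcons => /andP [rp pu] [uv dv]; subst u.
have le1 : dist (last r p) <= size p by apply/dist_min/reachable_inP; exists p.
have [q rq [qu sq]] := reachable_inP _ _ (dist_reachable (last r p)).
have le2 : dist v <= (size q).+1.
  apply/dist_min/reachable_inP; exists (rcons q v); last by rewrite last_rcons size_rcons.
  by rewrite rcons_path rq qu.
by exists (last r p) => //; lia.
Qed.

Lemma rooting_exists : exists d par, rooting adj r d par.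
Proof.
pose par v := if [pick u | adj u v & dist v == (dist u).+1] is Some u then u else v.
exists dist, par; split=> [|v vr]; first exact: dist_root.
rewrite /par; case: pickP => [u /andP [uv /eqP] //|none].
by have [u uv du] := dist_parent vr; have := none u; rewrite uv du eqxx.
Qed.
End Distance.

Section RootedTree.
Variables (V : finType) (adj : rel V).
Hypotheses (sym : symmetric adj) (irr : irreflexive adj) (acyc : acyclic_graph adj).
Variables (r : V) (d : V -> nat) (par : V -> V).
Hypothesis root : rooting adj r d par.

Lemma depth_root : d r = 0. Proof. by case: root. Qed.

Lemma adj_parent v : v != r -> adj (par v) v.
Proof. by case: root => _ /(_ v) h /h []. Qed.

Lemma depth_parent v : v != r -> d v = (d (par v)).+1.
Proof. by case: root => _ /(_ v) h /h []. Qed.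

Lemma depth0_root v : d v = 0 -> v = r.
Proof. by case: (eqVneq v r) => // /depth_parent ->. Qed.

Lemma tree_path x y : x != y -> exists p, [/\ path adj x p, last x p = y, uniq (x :: p),
  {in x :: p, forall z, [\/ z = x, z = y | d z < maxn (d x) (d y)]} &
  (size p <= 1 -> (x != r /\ y = par x) \/ (y != r /\ x = par y))]%N.
Proof.
move: {-1}(d x + d y)%N (leqnn (d x + d y)) => n.
elim: n x y => [|n IH] x y hn xy.
  move: hn; rewrite leqn0 addn_eq0 => /andP [/eqP/depth0_root xr /eqP/depth0_root yr].
  by rewrite xr yr eqxx in xy.
wlog le_yx : x y hn xy / (d y <= d x)%N.
  move=> hw; case/orP: (leq_total (d y) (d x)) => le; first exact: hw.
  have [||//|p [yp py up dp sp]] := hw y x; [by rewrite addnC | by rewrite eq_sym |].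
  have E : x :: rev (belast y p) = rev (y :: p) by rewrite [y :: p]lastI py rev_rcons.
  exists (rev (belast y p)); split.
  - by rewrite -{1}py rev_path; apply: sub_path yp => a b; rewrite sym.
  - by have := congr1 (last x) E; rewrite rev_cons last_rcons.
  - by rewrite E rev_uniq.
  - move=> z; rewrite E mem_rev maxnC => /dp [] ->; by [constructor 2|constructor 1|constructor 3].
  - by rewrite size_rev size_belast => /sp [] ?; [right|left].
have xr : x != r.
  by apply: contraNneq xy => xr; move: le_yx; rewrite xr depth_root leqn0 => /eqP/depth0_root->.
have dx := depth_parent xr.
case: (eqVneq (par x) y) xy => [<- xpx | pxy xy].
  exists [:: par x]; split => //.
  - by rewrite /= sym adj_parent.
  - by rewrite /= inE xpx.
  - by move=> z; rewrite !inE => /orP [] /eqP ->; [constructor 1|constructor 2].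
  - by left.
have [|p [pp lp up dp _]] := IH (par x) y _ pxy; first by lia.
have xp : x \notin par x :: p.
  apply/negP => /dp [E|E|]; [by move: dx; rewrite -E; lia | by rewrite E eqxx in xy | by lia].
exists (par x :: p); split=> //=.
- by rewrite sym adj_parent.
- by rewrite xp.
- move=> z; rewrite inE => /orP [/eqP ->|/dp [->|->|]]; first by constructor 1.
  + by constructor 3; lia.
  + by constructor 2.
  + by constructor 3; lia.
- by case: p lp {pp up dp xp} => [/= E|]; first by rewrite E eqxx in pxy.
Qed.

Lemma edge_parent u v : adj u v -> (u != r /\ v = par u) \/ (v != r /\ u = par v).
Proof.
move=> uv; have uv' : u != v by apply: contraTneq uv => ->; rewrite irr.
have [p [up pv uniq_p _ short]] := tree_path uv'.
apply: short; rewrite leqNgt; apply/negP => long.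
by have := acyc uniq_p long up; rewrite pv sym uv.
Qed.

Definition child (u v : V) : bool := (u != r) && (par u == v).

Lemma parent_not_child v : v != r -> ~~ child (par v) v.
Proof.
move=> vr; apply/andP => -[pr /eqP ppv].
by have := depth_parent pr; rewrite ppv (depth_parent vr); lia.
Qed.

Lemma adj_parent_or_child v u : adj v u = ((v != r) && (u == par v)) || child u v.
Proof.
apply/idP/idP => [/edge_parent [[-> ->]|[ur ->]] | /orP [/andP [vr /eqP ->]|/andP [ur /eqP <-]]].
- by rewrite eqxx.
- by rewrite /child ur eqxx orbT.
- by rewrite sym adj_parent.
- exact: adj_parent.
Qed.

Lemma parent_edge_inj u x : u != r -> x != r -> [set u; par u] = [set x; par x] -> u = x.
Proof.
move=> ur xr E; have du := depth_parent ur; have dx := depth_parent xr.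
have : u \in [set x; par x] by rewrite -E set21.
rewrite !inE => /orP [/eqP //|/eqP ux].
have : par u \in [set x; par x] by rewrite -E set22.
by rewrite !inE => /orP [] /eqP pu; move: du; rewrite pu ux; lia.
Qed.

Variable G : zmodType.
Local Open Scope ring_scope.

Definition edge_label (g : V -> G) (e : {set V}) : G :=
  \sum_(u | (u != r) && (e == [set u; par u])) g u.

Lemma edge_label_parent g u : u != r -> edge_label g [set u; par u] = g u.
Proof.
move=> ur; rewrite /edge_label (eq_bigl (pred1 u)) ?big_pred1_eq // => x /=.
apply/andP/eqP => [[xr /eqP E]|->]; last by rewrite ur eqxx.
exact/esym/parent_edge_inj.
Qed.

Lemma weight_edge_label g v :
  weight adj (edge_label g) v = (if v != r then g v else 0) + \sum_(u | child u v) g u.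
Proof.
rewrite /weight (bigID (child^~ v)) /= addrC; congr (_ + _).
- case: ifP => vr; last by rewrite big_pred0 // => u; rewrite adj_parent_or_child vr andbN.
  rewrite (eq_bigl (pred1 (par v))) ?big_pred1_eq ?edge_label_parent // => u /=.
  rewrite adj_parent_or_child vr /=; case: eqVneq => [->|_] /=; last by rewrite andbN.
  exact: parent_not_child.
- apply: eq_big => [u|u /andP [_ /andP [ur /eqP <-]]]; last by rewrite setUC edge_label_parent.
  by rewrite adj_parent_or_child; case: (child u v); rewrite ?orbT ?andbF.
Qed.

Lemma bottom_up_exists (step : V -> G -> G) :
  exists F : V -> G, forall v, F v = step v (\sum_(u | child u v) F u).
Proof.
(* [h - d v] iterations suffice at [v]: its children lie one level deeper. *)
pose h := (\max_(v : V) d v).+1.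
pose iter_step (F : V -> G) v := step v (\sum_(u | child u v) F u).
exists (fun v => iter (h - d v) iter_step (fun _ => 0) v) => v.
have E : (h - d v = (h - (d v).+1).+1)%N by have := leq_bigmax (F := d) v; lia.
rewrite E /=; congr (step v _); apply: eq_bigr => u /andP [ur /eqP pu].
by rewrite (depth_parent ur) pu.
Qed.
End RootedTree.

Lemma star_center (V : finType) (adj : rel V) : is_tree adj -> 3 <= #|V| ->
  exists c q v, [/\ adj c q, adj c v, v != q & forall u w, adj c u -> u != q -> adj u w -> w = c].
Proof.
move=> [[sym irr] conn acyc] n3.
have /card_gt0P [r0 _] : 0 < #|V| by lia.
have [d [par rt]] := rooting_exists r0 conn.
have [v _ vmax] := @arg_maxnP _ r0 xpredT d isT.
have vr0 : v != r0.
  have /subsetPn [w _] : ~~ ([set: V] \subset [set r0]).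
    by apply/negP => /subset_leq_card; rewrite cardsT cards1; lia.
  rewrite in_set1 => wr; apply: contraTneq (vmax w isT) => ->.
  by rewrite (depth_root rt) (depth_parent rt wr).
have := depth_parent rt vr0; move Ec: (par v) => c dv.
have grandchild_leaf u w : u != r0 -> par u = c -> adj u w -> w = c.
  move=> ur puc /(edge_parent sym irr acyc rt) [[_ ->] // | [wr uw]].
  have := vmax w isT; rewrite (depth_parent rt wr) -uw (depth_parent rt ur) puc dv.
  by lia.
have [q [cq vq c_children]] : exists q, [/\ adj c q, v != q &
    forall u, adj c u -> u != q -> u != r0 /\ par u = c].
  case: (eqVneq c r0) => [cr|cr].
    have /subsetPn [x _] : ~~ ([set: V] \subset [set c; v]).
      by apply/negP => /subset_leq_card; rewrite cardsT cards2; case: (c != v); lia.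
    rewrite !inE negb_or => /andP [xc xv].
    have xr : x != r0 by rewrite -cr.
    have px : par x = c.
      have := vmax x isT; rewrite (depth_parent rt xr) dv cr (depth_root rt) => le.
      by apply: (depth0_root rt); lia.
    exists x; split; first by rewrite -px (adj_parent rt xr).
    - by rewrite eq_sym.
    - move=> u cu _; case: (edge_parent sym irr acyc rt cu) => [[] | [ur cpu]].
        by rewrite cr eqxx.
      by split.
  exists (par c); split; first by rewrite sym (adj_parent rt cr).
  - apply/eqP => vpc; move: dv; rewrite (depth_parent rt cr) -vpc; lia.
  - move=> u cu uq; case: (edge_parent sym irr acyc rt cu) => [[_ E] | [ur cpu]].
      by rewrite E eqxx in uq.
    by split.
exists c, q, v; split=> // [|u w cu uq]; first by rewrite -Ec (adj_parent rt vr0).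
by have [ur puc] := c_children u cu uq; apply: grandchild_leaf.
Qed.

Lemma exists_notin (T : eqType) (s l : seq T) :
  uniq s -> (size l < size s)%N -> exists x, x \notin l.
Proof.
move=> us ls; case: (boolP (all (mem l) s)) => [/allP sl | /allPn [x _ xl]].
  by have := uniq_leq_size us sl; rewrite leqNgt ls.
by exists x.
Qed.

Definition choose_neq (T : eqType) (S x y : T) : T := if x != S then x else y.

Lemma choose_neq_neq (T : eqType) (S x y : T) : x != y -> choose_neq S x y != S.
Proof. by rewrite /choose_neq; case: (eqVneq x S) => [<-|] //=; rewrite eq_sym. Qed.

Lemma choose_neq_mem (T : eqType) (S x y : T) : choose_neq S x y \in [:: x; y].
Proof. by rewrite /choose_neq !inE; case: ifP; rewrite eqxx ?orbT. Qed.

Section StarLabels.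
Variable G : zmodType.
Local Open Scope ring_scope.
Hypothesis avoid4 : forall l : seq G, (size l <= 4)%N -> exists x, x \notin l.
Variables (I : finType) (s b : G).
Hypotheses (s_neq0 : s != 0) (b_neq0 : b != 0).

Lemma nonzero_sum_labels (A : {set I}) :
  exists y (lab : I -> G),
    [/\ y != 0, forall i, lab i \in [:: b; y] & s + \sum_(i in A) lab i != 0].
Proof.
case: (pickP (mem A)) => [i1 Ai1|A0]; last first.
  by exists b, (fun _ => b); rewrite big_pred0 // addr0 inE eqxx.
pose R := s + \sum_(i in A | i != i1) b.
have [y] := @avoid4 [:: 0; - R] isT; rewrite !inE negb_or => /andP [y0 yR].
exists y, (fun i => if i == i1 then y else b); split=> // [i|].
  by case: eqP; rewrite !inE eqxx ?orbT.
rewrite (bigD1 i1) //= eqxx addrCA addr_eq0.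
rewrite (eq_bigr (fun _ => b)) => [|i /andP [_ /negbTE ->]] //.
Qed.

Lemma star_labels (A : {set I}) (i0 : I) : i0 \in A -> exists lab : I -> G,
  [/\ s + \sum_(i in A) lab i != 0, s + \sum_(i in A) lab i != b,
      forall i, lab i != 0 & forall i, s + \sum_(i in A) lab i != lab i].
Proof.
move=> Ai0; have [y [lab [y0 laby P0]]] := nonzero_sum_labels (A :\ i0).
set P := s + _ in P0.
have [z] := @avoid4 [:: 0; - P; b - P; y - P] isT.
rewrite !inE !negb_or => /and4P [z0 zP zb zy].
exists (fun i => if i == i0 then z else lab i).
have -> : s + \sum_(i in A) (if i == i0 then z else lab i) = z + P.
  rewrite (big_setD1 i0) //= eqxx addrCA; congr (_ + (_ + _)).
  by apply: eq_bigr => i; rewrite in_setD1 => /andP [/negbTE ->].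
have shift x : (z + P != x) = (z != x - P) by rewrite (can2_eq (addrK P) (subrK P)).
split=> [||i|i]; rewrite ?shift ?sub0r //.
- by case: ifP => // _; move: (laby i); rewrite !inE => /orP [] /eqP ->.
- case: ifP => _; first by rewrite -subr_eq0 subKr.
  by move: (laby i); rewrite !inE => /orP [] /eqP ->.
Qed.
End StarLabels.

Section StarLabeling.
Variables (V : finType) (adj : rel V).
Hypotheses (sym : symmetric adj) (irr : irreflexive adj) (acyc : acyclic_graph adj).
Variables (c q : V) (d : V -> nat) (par : V -> V).
Hypothesis rt : rooting adj c d par.
Hypothesis cq : adj c q.
Hypothesis star_leaves : forall u w, adj c u -> u != q -> adj u w -> w = c.
Variable G : zmodType.
Local Open Scope ring_scope.

Let L := [set u | adj c u & u != q].
Let sum_children (F : V -> G) u := \sum_(w | child c par w u) F w.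

Definition star_label (F lab : V -> G) (u : V) : G := if u \in L then lab u else F u.

Lemma child_center u : child c par u c = adj c u.
Proof. by rewrite (adj_parent_or_child sym irr acyc rt) eqxx. Qed.

Lemma star_leaf_parent u : u \in L -> u != c /\ par u = c.
Proof. by rewrite inE -child_center => /andP [/andP [uc /eqP]]. Qed.

Lemma star_leaf_childless w u : u \in L -> ~~ child c par w u.
Proof.
rewrite inE => /andP [cu uq]; apply/negP => wu.
have uw : adj u w by rewrite (adj_parent_or_child sym irr acyc rt) wu orbT.
have /andP [wc _] := wu.
by rewrite (star_leaves cu uq uw) eqxx in wc.
Qed.

Lemma weight_off_star F lab u : u != c -> u \notin L ->
  weight adj (edge_label c par (star_label F lab)) u = F u + sum_children F u.
Proof.
move=> uc uL; rewrite (weight_edge_label sym irr acyc rt) uc /star_label (negbTE uL); congr (_ + _).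
apply: eq_bigr => w /andP [_ /eqP pw]; case: ifP => // /star_leaf_parent [_].
by rewrite pw => E; rewrite E eqxx in uc.
Qed.

Lemma weight_star_leaf F lab u : u \in L ->
  weight adj (edge_label c par (star_label F lab)) u = lab u.
Proof.
move=> uL; have [uc _] := star_leaf_parent uL.
rewrite (weight_edge_label sym irr acyc rt) uc /star_label uL big_pred0 ?addr0 // => w.
exact/negbTE/star_leaf_childless.
Qed.

Lemma weight_star_center F lab :
  weight adj (edge_label c par (star_label F lab)) c = F q + \sum_(u in L) lab u.
Proof.
rewrite (weight_edge_label sym irr acyc rt) eqxx add0r (eq_bigl _ _ child_center) (bigD1 q) //=.
have qL : q \notin L by rewrite inE eqxx andbF.
rewrite /star_label (negbTE qL); congr (_ + _).
apply: eq_big => [u|u]; first by rewrite inE andbC.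
by move=> cuq; rewrite inE cuq.
Qed.

Variables a1 a2 b1 b2 : G.
Hypothesis distinct : uniq [:: a1; a2; b1; b2; 0].

Definition target (u : V) (S : G) : G :=
  if odd (d u) then choose_neq S b1 b2 else choose_neq S a1 a2.

Lemma target_mem u S : target u S \in if odd (d u) then [:: b1; b2] else [:: a1; a2].
Proof. by rewrite /target; case: odd; apply: choose_neq_mem. Qed.

Lemma target_neq u S : target u S != S.
Proof.
move: distinct; rewrite /= !inE !negb_or => /and5P [/and4P [a12 _ _ _] _ /andP [b12 _] _ _].
by rewrite /target; case: odd; apply: choose_neq_neq.
Qed.

Lemma target_neq0 u S : target u S != 0.
Proof.
move: distinct; rewrite /= !inE !negb_or.
move=> /and5P [/and4P [_ _ _ a10] /and3P [_ _ a20] /andP [_ b10] b20 _].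
by have := target_mem u S; case: odd; rewrite !inE => /orP [] /eqP ->.
Qed.

Lemma target_parity u w S T : odd (d u) != odd (d w) -> target u S != target w T.
Proof.
move: distinct; rewrite /= !inE !negb_or.
move=> /and5P [/and4P [_ a1b1 a1b2 _] /and3P [a2b1 a2b2 _] _ _ _].
have := target_mem u S; have := target_mem w T.
by case: odd; case: odd; rewrite // !inE => /orP [] /eqP -> /orP [] /eqP -> _; rewrite // eq_sym.
Qed.

Hypothesis avoid4 : forall l : seq G, (size l <= 4)%N -> exists x, x \notin l.
Variable v : V.
Hypotheses (cv : adj c v) (vq : v != q).

Lemma star_labeling_exists : exists f : {set V} -> G,
  [/\ forall u w, adj u w -> f [set u; w] != 0,
      forall u, weight adj f u != 0 &
      forall u w, adj u w -> weight adj f u != weight adj f w].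
Proof.
have [F F_rec] := bottom_up_exists rt (fun u S => target u S - S).
have F_sum u : F u + sum_children F u = target u (sum_children F u) by rewrite {1}F_rec subrK.
have F_neq0 u : F u != 0 by rewrite F_rec subr_eq0 target_neq.
have vL : v \in L by rewrite inE cv vq.
have [lab [c_neq0 c_neq_q lab_neq0 c_neq_lab]] :=
  star_labels avoid4 (F_neq0 q) (target_neq0 q (sum_children F q)) vL.
pose g := star_label F lab.
have g_neq0 u : g u != 0 by rewrite /g /star_label; case: ifP.
have w_off u : u != c -> u \notin L ->
    weight adj (edge_label c par g) u = target u (sum_children F u).
  by move=> uc uL; rewrite weight_off_star //; exact: F_sum.
have parent_neq u : u != c ->
    weight adj (edge_label c par g) u != weight adj (edge_label c par g) (par u).
  move=> uc; have [pc|pc] := eqVneq (par u) c.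
    have cu : adj c u by rewrite -pc (adj_parent rt uc).
    rewrite pc weight_star_center; case: (boolP (u \in L)) => uL.
      by rewrite weight_star_leaf // eq_sym.
    have uq : u = q by apply/eqP; move: uL; rewrite inE cu negbK.
    by rewrite w_off // uq eq_sym.
  have uL : u \notin L by apply: contra pc => /star_leaf_parent [_ ->].
  have puL : par u \notin L.
    by apply/negP => /(star_leaf_childless u); rewrite /child uc eqxx.
  rewrite !w_off //; apply: target_parity.
  by rewrite (depth_parent rt uc) /=; case: odd.
exists (edge_label c par g); split.
- move=> u w /(edge_parent sym irr acyc rt) [[uc ->]|[wc ->]]; last rewrite setUC;
  by rewrite (edge_label_parent rt) ?g_neq0.
- move=> u; case: (eqVneq u c) => [->|uc]; first by rewrite weight_star_center.
  case: (boolP (u \in L)) => uL; first by rewrite weight_star_leaf.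
  by rewrite w_off // target_neq0.
- move=> u w /(edge_parent sym irr acyc rt) [[uc ->]|[wc ->]]; last rewrite eq_sym;
  exact: parent_neq.
Qed.
End StarLabeling.

Local Open Scope ring_scope.

Theorem mainTheorem9 (V : finType) (adj : rel V) (G : zmodType) :
  is_tree adj -> (3 <= #|V|)%N ->
  (exists s : seq G, uniq s /\ (5 <= size s)%N) ->
  exists f : {set V} -> G,
    [/\ (forall u v, adj u v -> f [set u; v] != 0),
        (forall v, weight adj f v != 0) &
        (forall u v, adj u v -> weight adj f u != weight adj f v)].
Proof.
move=> tree n3 [s [uniq_s s5]].
have avoid4 (l : seq G) : (size l <= 4)%N -> exists x, x \notin l.
  by move=> l4; apply: (exists_notin uniq_s); apply: leq_ltn_trans l4 s5.
have [b2 b2_new] := avoid4 [:: 0] isT.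
have [b1 b1_new] := avoid4 [:: b2; 0] isT.
have [a2 a2_new] := avoid4 [:: b1; b2; 0] isT.
have [a1 a1_new] := avoid4 [:: a2; b1; b2; 0] isT.
have distinct : uniq [:: a1; a2; b1; b2; 0] by rewrite /= a1_new a2_new b1_new b2_new.
have [c [q [v [cq cv vq leaves]]]] := star_center tree n3.
case: tree => [[sym irr] conn acyc].
have [d [par rt]] := rooting_exists c conn.
exact: (star_labeling_exists sym irr acyc rt cq leaves distinct avoid4 cv vq).
Qed.
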